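(* Let $\epsilon=\exp\!\left(-\frac{1}{\sigma^2}(\|u_T\|_\infty+\|f\|_\infty T)\right)$ and define $\widehat\psi^0=0\in\mathcal{M}$, $\widehat\phi^{n+\frac12}=\widehat\Phi(\widehat\psi^n)$, $\widehat\psi^{n+1}=\widehat\Psi(\widehat\phi^{n+\frac12})$ for $n\in\mathbb{N}$. Then: (i) $(\widehat\phi^{n+\frac12})_n$ is an entrywise nonincreasing sequence in $\mathcal{M}_\epsilon$; (ii) $(\widehat\psi^n)_n$ is an entrywise nondecreasing sequence in $\mathcal{M}_0$, bounded from above by $\frac{\|m_0\|_\infty}{\epsilon}$; (iii) $(\widehat\phi^{n+\frac12},\widehat\psi^n)_n$ converges to a couple $(\widehat\phi,\widehat\psi)\in\mathcal{M}_\epsilon\times\mathcal{M}_0$ satisfying, for $0\le i\le I-1$, $0\le j\le J$, $\frac{\widehat\phi_{i+1,j}-\widehat\phi_{i,j}}{\Delta t}+\frac{\sigma^2}{2}\frac{\widehat\phi_{i,j+1}-2\widehat\phi_{i,j}+\widehat\phi_{i,j-1}}{(\Delta x)^2}=-\frac{1}{\sigma^2}f(x_j,\widehat\phi_{i,j}\widehat\psi_{i,j})\widehat\phi_{i,j}$, $\widehat\phi_{I,j}=\exp(u_T(x_j)/\sigma^2)$, $\frac{\widehat\psi_{i+1,j}-\widehat\psi_{i,j}}{\Delta t}-\frac{\sigma^2}{2}\frac{\widehat\psi_{i+1,j+1}-2\widehat\psi_{i+1,j}+\widehat\psi_{i+1,j-1}}{(\Delta x)^2}=\frac{1}{\sigma^2}f(x_j,\widehat\phi_{i+1,j}\widehat\psi_{i+1,j})\widehat\psi_{i+1,j}$,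 $\widehat\psi_{0,j}=m_0(x_j)/\widehat\phi_{0,j}$, with the Neumann conventions for indices $-1$ and $J+1$.
   Context: Discrete setting: $\Omega=(0,1)$, $T>0$, $\sigma>0$; $u_T:[0,1]\to\mathbb{R}$ bounded, $m_0:[0,1]\to\mathbb{R}$ bounded with $m_0\ge0$. $f:[0,1]\times\mathbb{R}\to\mathbb{R}$ is continuous and nonincreasing in its second variable, bounded with $\|f\|_\infty=\sup|f|$, and $f\le0$. For positive integers $I,J$: $\Delta t=T/I$, $\Delta x=1/J$, $x_j=j\Delta x$. $\mathcal{M}$ is the set of real matrices $(m_{i,j})_{0\le i\le I,0\le j\le J}$, $\mathcal{M}_\epsilon=\{m\in\mathcal{M}: m_{i,j}\ge\epsilon\ \forall i,j\}$. Conventions: $a_{i,-1}=a_{i,0}$, $a_{i,J+1}=a_{i,J}$ for any matrix $a$. $\widehat\Phi:\mathcal{M}_0\to\mathcal{M}$ maps $\widehat\psi$ to the unique $\widehat\phi$ solving the $\phi$-equations in (iii) (with $\widehat\psi$ given) and $\widehat\phi_{I,j}=\exp(u_T(x_j)/\sigma^2)$; $\widehat\Psi:\mathcal{M}_\epsilon\to\mathcal{M}$ maps $\widehat\phi$ to the unique $\widehat\psi$ solving the $\psi$-equations in (iii) (with $\widehat\phi$ given) and $\widehat\psi_{0,j}=m_0(x_j)/\widehat\phi_{0,j}$. These maps are well defined, $\widehat\Phi(\mathcal{M}_0)\subset\mathcal{M}_\epsilon$ and $\widehat\Psi(\mathcal{M}_\epsilon)\subset\mathcal{M}_0$. *)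

From Stdlib Require Import Reals Lra.
Open Scope R_scope.

(* A "matrix" (m_{i,j})_{0<=i<=I, 0<=j<=J}: only entries with i<=I, j<=J matter. *)
Definition mat := nat -> nat -> R.

Definition is_sup_norm (g : R -> R) (N : R) : Prop :=
  is_lub (fun y => exists x, 0 <= x <= 1 /\ y = Rabs (g x)) N.

Definition is_sup_norm2 (f : R -> R -> R) (N : R) : Prop :=
  is_lub (fun y => exists x z, 0 <= x <= 1 /\ y = Rabs (f x z)) N.

Definition continuous2_on (f : R -> R -> R) : Prop :=
  forall x z, 0 <= x <= 1 -> forall e, 0 < e -> exists d, 0 < d /\
    forall x' z', 0 <= x' <= 1 -> Rabs (x' - x) < d -> Rabs (z' - z) < d ->
      Rabs (f x' z' - f x z) < e.

Definition in_M (I J : nat) (eps : R) (m : mat) : Prop :=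
  forall i j, (i <= I)%nat -> (j <= J)%nat -> eps <= m i j.

(* Neumann conventions: a_{i,-1} = a_{i,0}, a_{i,J+1} = a_{i,J} *)
Definition nbrL (a : mat) (i j : nat) : R := a i (Nat.pred j).
Definition nbrR (J : nat) (a : mat) (i j : nat) : R := a i (Nat.min (S j) J).

Definition dt (T : R) (I : nat) : R := T / INR I.
Definition dx (J : nat) : R := 1 / INR J.
Definition xg (J : nat) (j : nat) : R := INR j * dx J.

Definition phi_system (T sigma : R) (I J : nat) (uT : R -> R) (f : R -> R -> R)
    (psi phi : mat) : Prop :=
  (forall i j, (i < I)%nat -> (j <= J)%nat ->
     (phi (S i) j - phi i j) / dt T I
     + sigma ^ 2 / 2 * (nbrR J phi i j - 2 * phi i j + nbrL phi i j) / (dx J) ^ 2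
     = - (1 / sigma ^ 2) * f (xg J j) (phi i j * psi i j) * phi i j)
  /\ (forall j, (j <= J)%nat -> phi I j = exp (uT (xg J j) / sigma ^ 2)).

Definition psi_system (T sigma : R) (I J : nat) (m0 : R -> R) (f : R -> R -> R)
    (phi psi : mat) : Prop :=
  (forall i j, (i < I)%nat -> (j <= J)%nat ->
     (psi (S i) j - psi i j) / dt T I
     - sigma ^ 2 / 2 * (nbrR J psi (S i) j - 2 * psi (S i) j + nbrL psi (S i) j) / (dx J) ^ 2
     = (1 / sigma ^ 2) * f (xg J j) (phi (S i) j * psi (S i) j) * psi (S i) j)
  /\ (forall j, (j <= J)%nat -> psi O j = m0 (xg J j) / phi O j).

From Stdlib Require Import Reals Lra Lia.
Open Scope R_scope.

(* Both discrete equations are implicit in the unknown row: with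
   c = dt*sigma^2/(2 dx^2) >= 0, k = dt/sigma^2 > 0 and the Neumann Laplacian lapN,
   one row X of phi (resp. psi) solves  X - c*lapN X - k*F(X)*X = (known row).
   The key tool is a discrete maximum principle for this row operator
   ([discrete_max_principle]): it is proved by looking at the index where
   X1 - X2 is maximal.  Sweeping the rows (backward for phi, forward for psi) it gives:
   - every solution of the phi-equations is bounded below by eps ([Phi_lower_bound]);
   - every solution of the psi-equations lies between 0 and ||m0||/eps
     ([psi_nonneg], [psi_upper_bound]);
   - both solution maps are antitone ([Phi_antitone], [Psi_antitone]).
   By induction the iterates are monotone ([iterates_monotone]); being monotone and
   bounded they converge entrywise ([mat_decreasing_cv], [mat_increasing_cv]), and
   continuity of f lets us pass to the limit in the equations
   ([phi_system_limit], [psi_system_limit]). *)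

Lemma exp_le_mono x y : x <= y -> exp x <= exp y.
Proof. intros [H|H]; [left; apply exp_increasing; auto | rewrite H; lra]. Qed.

Lemma div_nonneg a b : 0 <= a -> 0 < b -> 0 <= a / b.
Proof. intros Ha Hb. apply Rmult_le_pos; [exact Ha | left; apply Rinv_0_lt_compat, Hb]. Qed.

(* One step of the geometric lower bound for phi: (1 + y) <= exp y, scaled. *)
Lemma exp_shift_bound x y : exp (x - y) * (1 + y) <= exp x.
Proof.
  replace (exp x) with (exp (x - y) * exp y) by (rewrite <- exp_plus; f_equal; ring).
  apply Rmult_le_compat_l; [left; apply exp_pos | apply exp_ineq1_le].
Qed.

Lemma nat_backward_ind (P : nat -> Prop) (I : nat) :
  P I -> (forall i, (i < I)%nat -> P (S i) -> P i) -> forall i, (i <= I)%nat -> P i.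
Proof.
  intros HI Hstep i Hi. remember (I - i)%nat as m eqn:Hm. revert i Hi Hm.
  induction m as [|m IH]; intros i Hi Hm.
  - replace i with I by lia. exact HI.
  - apply Hstep; [lia|]. apply IH; lia.
Qed.

Lemma finite_argmax (g : nat -> R) (J : nat) :
  exists m, (m <= J)%nat /\ forall j, (j <= J)%nat -> g j <= g m.
Proof.
  induction J as [|J [m [Hm Hmax]]].
  - exists 0%nat; split; [lia|]. intros j Hj; replace j with 0%nat by lia; lra.
  - destruct (Rle_or_lt (g (S J)) (g m)) as [h|h].
    + exists m; split; [lia|]. intros j Hj.
      destruct (Nat.eq_dec j (S J)) as [->|hj]; [exact h | apply Hmax; lia].
    + exists (S J); split; [lia|]. intros j Hj.
      destruct (Nat.eq_dec j (S J)) as [->|hj]; [lra|].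
      pose proof (Hmax j ltac:(lia)); lra.
Qed.

(* Discrete Laplacian on {0,...,J} with the Neumann conventions X(-1)=X(0), X(J+1)=X(J). *)
Definition lapN (J : nat) (X : nat -> R) (j : nat) : R :=
  X (Nat.min (S j) J) - 2 * X j + X (Nat.pred j).

Lemma lapN_const (J : nat) (a : R) (j : nat) : lapN J (fun _ => a) j = 0.
Proof. unfold lapN; ring. Qed.

Lemma discrete_max_principle (J : nat) (c k : R) (X1 X2 G1 G2 : nat -> R) :
  0 <= c -> 0 <= k ->
  (forall j, (j <= J)%nat ->
     X1 j - c * lapN J X1 j - k * G1 j <= X2 j - c * lapN J X2 j - k * G2 j) ->
  (forall j, (j <= J)%nat -> X2 j < X1 j -> G1 j <= G2 j) ->
  forall j, (j <= J)%nat -> X1 j <= X2 j.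
Proof.
  intros Hc Hk Hop HG.
  destruct (finite_argmax (fun j => X1 j - X2 j) J) as [m [Hm Hmax]]; cbv beta in Hmax.
  assert (Hmax_nonpos : X1 m - X2 m <= 0).
  { destruct (Rle_or_lt (X1 m - X2 m) 0) as [h|h]; [exact h|]. exfalso.
    pose proof (Hmax (Nat.min (S m) J) ltac:(lia)).
    pose proof (Hmax (Nat.pred m) ltac:(lia)).
    pose proof (Hop m Hm). pose proof (HG m Hm ltac:(lra)). unfold lapN in *.
    assert (0 <= c * ((X1 m - X2 m) - (X1 (Nat.min (S m) J) - X2 (Nat.min (S m) J))
                      + (X1 m - X2 m) - (X1 (Nat.pred m) - X2 (Nat.pred m))))
      by (apply Rmult_le_pos; lra).
    assert (0 <= k * (G2 m - G1 m)) by (apply Rmult_le_pos; lra).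
    lra. }
  intros j Hj. pose proof (Hmax j Hj). lra.
Qed.

Lemma phi_equation_rearranged (a b L F dtv s dxv : R) : 0 < dtv -> 0 < s -> 0 < dxv ->
  (a - b) / dtv + s ^ 2 / 2 * L / dxv ^ 2 = - (1 / s ^ 2) * F * b ->
  b - (dtv * s ^ 2 / 2 / dxv ^ 2) * L - (dtv / s ^ 2) * (F * b) = a.
Proof.
  intros Ht Hs Hx H.
  assert (0 < s ^ 2) by (apply pow_lt; lra).
  assert (0 < dxv ^ 2) by (apply pow_lt; lra).
  replace a with (b + dtv * ((a - b) / dtv)) by (field; lra).
  replace ((a - b) / dtv) with (- (1 / s ^ 2) * F * b - s ^ 2 / 2 * L / dxv ^ 2) by lra.
  field. split; lra.
Qed.

Lemma psi_equation_rearranged (a b L F dtv s dxv : R) : 0 < dtv -> 0 < s -> 0 < dxv ->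
  (a - b) / dtv - s ^ 2 / 2 * L / dxv ^ 2 = (1 / s ^ 2) * F * a ->
  a - (dtv * s ^ 2 / 2 / dxv ^ 2) * L - (dtv / s ^ 2) * (F * a) = b.
Proof.
  intros Ht Hs Hx H.
  assert (0 < s ^ 2) by (apply pow_lt; lra).
  assert (0 < dxv ^ 2) by (apply pow_lt; lra).
  replace b with (a - dtv * ((a - b) / dtv)) by (field; lra).
  replace ((a - b) / dtv) with ((1 / s ^ 2) * F * a + s ^ 2 / 2 * L / dxv ^ 2) by lra.
  field. split; lra.
Qed.

Lemma sup_norm_bounds (g : R -> R) (N : R) :
  is_sup_norm g N -> forall x, 0 <= x <= 1 -> - N <= g x <= N.
Proof.
  intros [Hub _] x Hx. assert (Rabs (g x) <= N) by (apply Hub; exists x; auto).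
  pose proof (Rle_abs (g x)). pose proof (Rle_abs (- g x)). rewrite Rabs_Ropp in *. lra.
Qed.

Lemma sup_norm2_bounds (g : R -> R -> R) (N : R) :
  is_sup_norm2 g N -> forall x z, 0 <= x <= 1 -> - N <= g x z <= N.
Proof.
  intros [Hub _] x z Hx. assert (Rabs (g x z) <= N) by (apply Hub; exists x, z; auto).
  pose proof (Rle_abs (g x z)). pose proof (Rle_abs (- g x z)). rewrite Rabs_Ropp in *. lra.
Qed.

Definition mat_le (I J : nat) (a b : mat) : Prop :=
  forall i j, (i <= I)%nat -> (j <= J)%nat -> a i j <= b i j.

Lemma mat_decreasing_cv (I J : nat) (u : nat -> mat) (b : R) :
  (forall n, mat_le I J (u (S n)) (u n)) -> (forall n, in_M I J b (u n)) ->
  exists l : mat, forall i j, (i <= I)%nat -> (j <= J)%nat -> Un_cv (fun n => u n i j) (l i j).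
Proof.
  intros Hdec Hlb.
  (* clamp the indices to the grid so that the limit is defined everywhere *)
  assert (Hd : forall i j, Un_decreasing (fun n => u n (Nat.min i I) (Nat.min j J)))
    by (intros i j n; apply Hdec; lia).
  assert (Hb : forall i j, has_lb (fun n => u n (Nat.min i I) (Nat.min j J))).
  { intros i j. exists (- b). intros x [n ->]. unfold opp_seq.
    pose proof (Hlb n (Nat.min i I) (Nat.min j J) ltac:(lia) ltac:(lia)). lra. }
  exists (fun i j => proj1_sig (decreasing_cv _ (Hd i j) (Hb i j))).
  intros i j Hi Hj. destruct (decreasing_cv _ (Hd i j) (Hb i j)) as [l Hl]. simpl.
  rewrite !Nat.min_l in Hl by lia. exact Hl.
Qed.

(* The nondecreasing, bounded-above case, by symmetry x |-> -x. *)
Lemma mat_increasing_cv (I J : nat) (u : nat -> mat) (B : R) :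
  (forall n, mat_le I J (u n) (u (S n))) ->
  (forall n i j, (i <= I)%nat -> (j <= J)%nat -> u n i j <= B) ->
  exists l : mat, forall i j, (i <= I)%nat -> (j <= J)%nat -> Un_cv (fun n => u n i j) (l i j).
Proof.
  intros Hinc Hub.
  destruct (mat_decreasing_cv I J (fun n i j => - u n i j) (- B)) as [l Hl].
  - intros n i j Hi Hj. pose proof (Hinc n i j Hi Hj). lra.
  - intros n i j Hi Hj. pose proof (Hub n i j Hi Hj). lra.
  - exists (fun i j => - l i j). intros i j Hi Hj.
    apply (Un_cv_ext (opp_seq (fun n => - u n i j))); [intro n; unfold opp_seq; ring|].
    apply CV_opp, Hl; auto.
Qed.

Lemma cv_const (a : R) : Un_cv (fun _ => a) a.
Proof.
  intros e He; exists 0%nat; intros; unfold R_dist.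
  replace (a - a) with 0 by ring; rewrite Rabs_R0; lra.
Qed.

Lemma in_M_limit (I J : nat) (b : R) (u : nat -> mat) (l : mat) :
  (forall n, in_M I J b (u n)) ->
  (forall i j, (i <= I)%nat -> (j <= J)%nat -> Un_cv (fun n => u n i j) (l i j)) ->
  in_M I J b l.
Proof.
  intros Hb Hcv i j Hi Hj.
  apply (Rle_cv_lim (Un := fun _ => b) (Vn := fun n => u n i j));
    [intro n; apply Hb; auto | apply cv_const | auto].
Qed.

Lemma limits_of_equal_sequences (u v : nat -> R) (a b : R) :
  (forall n, u n = v n) -> Un_cv u a -> Un_cv v b -> a = b.
Proof.
  intros Huv Ha Hb. apply (UL_sequence u); auto.
  apply (Un_cv_ext v); auto.
Qed.

Section Scheme.

Variables (T sigma : R) (I J : nat) (uT m0 : R -> R) (f : R -> R -> R).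
Hypotheses (HT : 0 < T) (Hsigma : 0 < sigma) (HI : (1 <= I)%nat) (HJ : (1 <= J)%nat).
Hypothesis Hm0pos : forall x, 0 <= x <= 1 -> 0 <= m0 x.
Hypothesis Hfneg : forall x z, 0 <= x <= 1 -> f x z <= 0.
Hypothesis Hfmon : forall x z1 z2, 0 <= x <= 1 -> z1 <= z2 -> f x z2 <= f x z1.

Let c := dt T I * sigma ^ 2 / 2 / dx J ^ 2.
Let k := dt T I / sigma ^ 2.

Lemma dt_pos : 0 < dt T I.
Proof. unfold dt. apply Rdiv_lt_0_compat; [lra | apply lt_0_INR; lia]. Qed.

Lemma dx_pos : 0 < dx J.
Proof. unfold dx. apply Rdiv_lt_0_compat; [lra | apply lt_0_INR; lia]. Qed.

Lemma diffusion_coef_nonneg : 0 <= c.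
Proof.
  pose proof dt_pos; pose proof dx_pos. unfold c. left.
  apply Rdiv_lt_0_compat; [|apply pow_lt; lra].
  apply Rdiv_lt_0_compat; [|lra]. apply Rmult_lt_0_compat; [lra | apply pow_lt; lra].
Qed.

Lemma reaction_coef_pos : 0 < k.
Proof. pose proof dt_pos. unfold k. apply Rdiv_lt_0_compat; [lra | apply pow_lt; lra]. Qed.

Lemma grid_in_unit (j : nat) : (j <= J)%nat -> 0 <= xg J j <= 1.
Proof.
  intros Hj. unfold xg, dx. apply le_INR in Hj. pose proof (pos_INR j).
  assert (0 < INR J) by (apply lt_0_INR; lia).
  replace (INR j * (1 / INR J)) with (INR j / INR J) by (field; lra).
  split; [apply div_nonneg; lra|].
  apply (Rmult_le_reg_r (INR J)); [lra|]. field_simplify; lra.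
Qed.

Lemma phi_step (psi phi : mat) : phi_system T sigma I J uT f psi phi ->
  forall i j, (i < I)%nat -> (j <= J)%nat ->
  phi i j - c * lapN J (phi i) j - k * (f (xg J j) (phi i j * psi i j) * phi i j)
  = phi (S i) j.
Proof.
  intros [Heq _] i j Hi Hj.
  exact (phi_equation_rearranged _ _ _ _ _ _ _ dt_pos Hsigma dx_pos (Heq i j Hi Hj)).
Qed.

Lemma psi_step (phi psi : mat) : psi_system T sigma I J m0 f phi psi ->
  forall i j, (i < I)%nat -> (j <= J)%nat ->
  psi (S i) j - c * lapN J (psi (S i)) j
    - k * (f (xg J j) (phi (S i) j * psi (S i) j) * psi (S i) j)
  = psi i j.
Proof.
  intros [Heq _] i j Hi Hj.
  exact (psi_equation_rearranged _ _ _ _ _ _ _ dt_pos Hsigma dx_pos (Heq i j Hi Hj)).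
Qed.

(* Any solution of the phi-equations (whatever psi) is bounded below by
   eps = exp(-(||u_T|| + ||f|| T)/sigma^2): row i is above
   exp(-||u_T||/sigma^2 - k ||f|| (I - i)), by backward induction on i. *)
Lemma Phi_lower_bound (uTn fn : R) (psi phi : mat) :
  (forall x, 0 <= x <= 1 -> - uTn <= uT x) ->
  (forall x z, 0 <= x <= 1 -> - fn <= f x z) -> 0 <= fn ->
  phi_system T sigma I J uT f psi phi ->
  in_M I J (exp (- (1 / sigma ^ 2) * (uTn + fn * T))) phi.
Proof.
  intros HuT Hf Hfn Hphi.
  pose proof reaction_coef_pos as Hk.
  assert (Hs2 : 0 < sigma ^ 2) by (apply pow_lt; lra).
  set (b := fun i => exp (- uTn / sigma ^ 2 - k * fn * (INR I - INR i))).
  assert (Hrow : forall i, (i <= I)%nat -> forall j, (j <= J)%nat -> b i <= phi i j).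
  { apply (nat_backward_ind (fun i => forall j, (j <= J)%nat -> b i <= phi i j)).
    - intros j Hj. rewrite (proj2 Hphi j Hj). unfold b. apply exp_le_mono.
      pose proof (HuT _ (grid_in_unit j Hj)).
      assert (- uTn / sigma ^ 2 <= uT (xg J j) / sigma ^ 2)
        by (apply Rmult_le_compat_r; [left; apply Rinv_0_lt_compat|]; lra).
      lra.
    - intros i Hi IH.
      assert (Hb : b i * (1 + k * fn) <= b (S i)).
      { unfold b. rewrite S_INR.
        replace (- uTn / sigma ^ 2 - k * fn * (INR I - INR i))
          with ((- uTn / sigma ^ 2 - k * fn * (INR I - (INR i + 1))) - k * fn) by ring.
        apply exp_shift_bound. }
      assert (Hb0 : 0 < b i) by apply exp_pos.
      apply (discrete_max_principle J c k (fun _ => b i) (phi i) (fun _ => - fn * b i)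
               (fun j => f (xg J j) (phi i j * psi i j) * phi i j));
        [apply diffusion_coef_nonneg | lra | |].
      + intros j Hj. rewrite lapN_const, (phi_step _ _ Hphi i j Hi Hj).
        pose proof (IH j Hj). lra.
      + intros j Hj Hlt.
        pose proof (Hf _ (phi i j * psi i j) (grid_in_unit j Hj)).
        pose proof (Hfneg _ (phi i j * psi i j) (grid_in_unit j Hj)).
        destruct (Rle_or_lt 0 (phi i j)); nra. }
  intros i j Hi Hj. eapply Rle_trans; [|apply Hrow; auto].
  unfold b. apply exp_le_mono.
  assert (E : - (1 / sigma ^ 2) * (uTn + fn * T) = - uTn / sigma ^ 2 - k * fn * INR I).
  { unfold k, dt. field. split; [apply not_0_INR; lia | lra]. }
  rewrite E. pose proof (pos_INR i).
  assert (0 <= k * fn) by (apply Rmult_le_pos; lra). nra.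
Qed.

Lemma psi_nonneg (phi psi : mat) :
  (forall j, (j <= J)%nat -> 0 < phi O j) ->
  psi_system T sigma I J m0 f phi psi -> in_M I J 0 psi.
Proof.
  intros Hphi0 Hpsi i. induction i as [|i IH]; intros j Hi Hj.
  - rewrite (proj2 Hpsi j Hj). apply div_nonneg; [apply Hm0pos, grid_in_unit | apply Hphi0]; auto.
  - apply (discrete_max_principle J c k (fun _ => 0) (psi (S i)) (fun _ => 0)
             (fun j => f (xg J j) (phi (S i) j * psi (S i) j) * psi (S i) j));
      [apply diffusion_coef_nonneg | left; apply reaction_coef_pos | | | exact Hj].
    + intros j' Hj'. rewrite lapN_const, (psi_step _ _ Hpsi i j' ltac:(lia) Hj').
      pose proof (IH j' ltac:(lia) Hj'). lra.
    + intros j' Hj' Hlt.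
      pose proof (Hfneg _ (phi (S i) j' * psi (S i) j') (grid_in_unit j' Hj')). nra.
Qed.

Lemma psi_upper_bound (m0n eps : R) (phi psi : mat) :
  0 < eps -> (forall x, 0 <= x <= 1 -> m0 x <= m0n) ->
  (forall j, (j <= J)%nat -> eps <= phi O j) ->
  psi_system T sigma I J m0 f phi psi ->
  forall i j, (i <= I)%nat -> (j <= J)%nat -> psi i j <= m0n / eps.
Proof.
  intros Heps Hm0 Hphi0 Hpsi.
  assert (HM : 0 <= m0n / eps).
  { apply div_nonneg; [|lra].
    pose proof (Hm0 0 ltac:(lra)); pose proof (Hm0pos 0 ltac:(lra)); lra. }
  intros i. induction i as [|i IH]; intros j Hi Hj.
  - rewrite (proj2 Hpsi j Hj). pose proof (Hphi0 j Hj).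
    apply Rmult_le_compat;
      [apply Hm0pos, grid_in_unit | left; apply Rinv_0_lt_compat; lra
      | apply Hm0, grid_in_unit | apply Rinv_le_contravar; lra]; auto.
  - apply (discrete_max_principle J c k (psi (S i)) (fun _ => m0n / eps)
             (fun j => f (xg J j) (phi (S i) j * psi (S i) j) * psi (S i) j) (fun _ => 0));
      [apply diffusion_coef_nonneg | left; apply reaction_coef_pos | | | exact Hj].
    + intros j' Hj'. rewrite lapN_const, (psi_step _ _ Hpsi i j' ltac:(lia) Hj').
      pose proof (IH j' ltac:(lia) Hj'). lra.
    + intros j' Hj' Hlt.
      pose proof (Hfneg _ (phi (S i) j' * psi (S i) j') (grid_in_unit j' Hj')). nra.
Qed.

(* Phi is antitone: a larger (nonnegative) psi gives a smaller phi.  Backward row sweep: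
   where phi2 > phi1 >= 0 the reaction f(phi*psi)*phi is smaller for phi2. *)
Lemma Phi_antitone (psi1 psi2 phi1 phi2 : mat) :
  in_M I J 0 psi1 -> in_M I J 0 phi1 -> mat_le I J psi1 psi2 ->
  phi_system T sigma I J uT f psi1 phi1 -> phi_system T sigma I J uT f psi2 phi2 ->
  mat_le I J phi2 phi1.
Proof.
  intros Hpsi1 Hphi1 Hpsi12 Hsys1 Hsys2 i j Hi.
  revert j. revert i Hi.
  apply (nat_backward_ind (fun i => forall j, (j <= J)%nat -> phi2 i j <= phi1 i j)).
  - intros j Hj. rewrite (proj2 Hsys1 j Hj), (proj2 Hsys2 j Hj). lra.
  - intros i Hi IH.
    apply (discrete_max_principle J c k (phi2 i) (phi1 i)
             (fun j => f (xg J j) (phi2 i j * psi2 i j) * phi2 i j)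
             (fun j => f (xg J j) (phi1 i j * psi1 i j) * phi1 i j));
      [apply diffusion_coef_nonneg | left; apply reaction_coef_pos | |].
    + intros j Hj. rewrite (phi_step _ _ Hsys1 i j Hi Hj), (phi_step _ _ Hsys2 i j Hi Hj).
      apply IH, Hj.
    + intros j Hj Hlt.
      pose proof (Hphi1 i j ltac:(lia) Hj). pose proof (Hpsi1 i j ltac:(lia) Hj).
      pose proof (Hpsi12 i j ltac:(lia) Hj).
      assert (Hz : phi1 i j * psi1 i j <= phi2 i j * psi2 i j) by nra.
      pose proof (Hfmon _ _ _ (grid_in_unit j Hj) Hz).
      pose proof (Hfneg _ (phi1 i j * psi1 i j) (grid_in_unit j Hj)).
      nra.
Qed.

Lemma Psi_antitone (phi1 phi2 psi1 psi2 : mat) :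
  (forall i j, (i <= I)%nat -> (j <= J)%nat -> 0 < phi2 i j) -> mat_le I J phi2 phi1 ->
  psi_system T sigma I J m0 f phi1 psi1 -> psi_system T sigma I J m0 f phi2 psi2 ->
  mat_le I J psi1 psi2.
Proof.
  intros Hphi2 Hphi12 Hsys1 Hsys2.
  assert (Hpsi2 : in_M I J 0 psi2) by (apply (psi_nonneg phi2); auto with arith).
  intros i. induction i as [|i IH]; intros j Hi Hj.
  - rewrite (proj2 Hsys1 j Hj), (proj2 Hsys2 j Hj).
    pose proof (Hphi2 O j ltac:(lia) Hj).
    apply Rmult_le_compat_l; [apply Hm0pos, grid_in_unit, Hj|].
    apply Rinv_le_contravar; [lra | apply Hphi12; auto with arith].
  - apply (discrete_max_principle J c k (psi1 (S i)) (psi2 (S i))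
             (fun j => f (xg J j) (phi1 (S i) j * psi1 (S i) j) * psi1 (S i) j)
             (fun j => f (xg J j) (phi2 (S i) j * psi2 (S i) j) * psi2 (S i) j));
      [apply diffusion_coef_nonneg | left; apply reaction_coef_pos | | | exact Hj].
    + intros j' Hj'.
      rewrite (psi_step _ _ Hsys1 i j' ltac:(lia) Hj'), (psi_step _ _ Hsys2 i j' ltac:(lia) Hj').
      apply IH; lia.
    + intros j' Hj' Hlt.
      pose proof (Hphi2 (S i) j' Hi Hj'). pose proof (Hpsi2 (S i) j' Hi Hj').
      pose proof (Hphi12 (S i) j' Hi Hj').
      assert (Hz : phi2 (S i) j' * psi2 (S i) j' <= phi1 (S i) j' * psi1 (S i) j') by nra.
      pose proof (Hfmon _ _ _ (grid_in_unit j' Hj') Hz).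
      pose proof (Hfneg _ (phi2 (S i) j' * psi2 (S i) j') (grid_in_unit j' Hj')).
      nra.
Qed.

(* The alternating iteration psi^0 = 0, phi^{n+1/2} = Phi(psi^n), psi^{n+1} = Psi(phi^{n+1/2})
   is monotone, as composition of two antitone maps started from the bottom. *)
Lemma iterates_monotone (eps : R) (phi psi : nat -> mat) :
  0 < eps -> (forall n, in_M I J eps (phi n)) -> (forall n, in_M I J 0 (psi n)) ->
  (forall i j, (i <= I)%nat -> (j <= J)%nat -> psi O i j = 0) ->
  (forall n, phi_system T sigma I J uT f (psi n) (phi n)) ->
  (forall n, psi_system T sigma I J m0 f (phi n) (psi (S n))) ->
  forall n, mat_le I J (psi n) (psi (S n)) /\ mat_le I J (phi (S n)) (phi n).
Proof.
  intros Heps Hphi_eps Hpsi_nonneg Hpsi0 Hphi Hpsi.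
  assert (Hphi_nonneg : forall n, in_M I J 0 (phi n)).
  { intros n i j Hi Hj. pose proof (Hphi_eps n i j Hi Hj). lra. }
  assert (Hphi_pos : forall n i j, (i <= I)%nat -> (j <= J)%nat -> 0 < phi n i j).
  { intros n i j Hi Hj. pose proof (Hphi_eps n i j Hi Hj). lra. }
  assert (Hphi_step : forall n, mat_le I J (psi n) (psi (S n)) -> mat_le I J (phi (S n)) (phi n))
    by (intros n Hle; exact (Phi_antitone _ _ _ _ (Hpsi_nonneg n) (Hphi_nonneg n) Hle
                               (Hphi n) (Hphi (S n)))).
  induction n as [|n [_ IH]].
  - assert (Hpsi01 : mat_le I J (psi O) (psi 1%nat)).
    { intros i j Hi Hj. rewrite Hpsi0 by auto. apply Hpsi_nonneg; auto. }
    split; [exact Hpsi01 | apply Hphi_step, Hpsi01].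
  - assert (Hpsi12 : mat_le I J (psi (S n)) (psi (S (S n))))
      by exact (Psi_antitone _ _ _ _ (Hphi_pos (S n)) IH (Hpsi n) (Hpsi (S n))).
    split; [exact Hpsi12 | apply Hphi_step, Hpsi12].
Qed.

Hypothesis Hfc : continuous2_on f.

Lemma f_seq_continuous (x : R) (u : nat -> R) (l : R) :
  0 <= x <= 1 -> Un_cv u l -> Un_cv (fun n => f x (u n)) (f x l).
Proof.
  intros Hx Hu e He. destruct (Hfc x l Hx e He) as [d [Hd Hcont]].
  destruct (Hu d Hd) as [N HN]. exists N. intros n Hn. unfold R_dist.
  apply Hcont; [exact Hx | | apply HN; exact Hn].
  replace (x - x) with 0 by ring. rewrite Rabs_R0. lra.
Qed.

Local Ltac limit_of_combination Hcvphi Hcvpsi :=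
  repeat first [ apply cv_const | apply CV_minus | apply CV_plus | apply CV_mult
               | apply f_seq_continuous; [apply grid_in_unit; lia|]
               | apply Hcvphi; lia | apply Hcvpsi; lia ].

Lemma phi_system_limit (phi psi : nat -> mat) (phih psih : mat) :
  (forall n, phi_system T sigma I J uT f (psi n) (phi n)) ->
  (forall i j, (i <= I)%nat -> (j <= J)%nat -> Un_cv (fun n => phi n i j) (phih i j)) ->
  (forall i j, (i <= I)%nat -> (j <= J)%nat -> Un_cv (fun n => psi n i j) (psih i j)) ->
  phi_system T sigma I J uT f psih phih.
Proof.
  intros Hsys Hcvphi Hcvpsi. split.
  - intros i j Hi Hj.
    eapply limits_of_equal_sequences; [intro n; exact (proj1 (Hsys n) i j Hi Hj) | |];
      unfold nbrR, nbrL, Rdiv; limit_of_combination Hcvphi Hcvpsi.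
  - intros j Hj.
    eapply limits_of_equal_sequences;
      [intro n; exact (proj2 (Hsys n) j Hj) | apply Hcvphi; lia | apply cv_const].
Qed.

(* The psi-equations pass to entrywise limits (psi^{n+1} has the same limit as psi^n);
   the initial condition needs the limit of phi to stay away from 0. *)
Lemma psi_system_limit (phi psi : nat -> mat) (phih psih : mat) :
  (forall n, psi_system T sigma I J m0 f (phi n) (psi (S n))) ->
  (forall i j, (i <= I)%nat -> (j <= J)%nat -> Un_cv (fun n => phi n i j) (phih i j)) ->
  (forall i j, (i <= I)%nat -> (j <= J)%nat -> Un_cv (fun n => psi n i j) (psih i j)) ->
  (forall n j, (j <= J)%nat -> phi n O j <> 0) -> (forall j, (j <= J)%nat -> phih O j <> 0) ->
  psi_system T sigma I J m0 f phih psih.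
Proof.
  intros Hsys Hcvphi Hcvpsi Hphi0 Hphih0.
  assert (HcvpsiS : forall i j, (i <= I)%nat -> (j <= J)%nat ->
                      Un_cv (fun n => psi (S n) i j) (psih i j)).
  { intros i j Hi Hj. apply (Un_cv_ext (fun n => psi (n + 1)%nat i j));
      [intro n; rewrite Nat.add_1_r; reflexivity | exact (CV_shift' (fun n => psi n i j) 1 _ (Hcvpsi i j Hi Hj))]. }
  split.
  - intros i j Hi Hj.
    eapply limits_of_equal_sequences; [intro n; exact (proj1 (Hsys n) i j Hi Hj) | |];
      unfold nbrR, nbrL, Rdiv; limit_of_combination Hcvphi HcvpsiS.
  - intros j Hj.
    assert (Hm0 : psih O j * phih O j = m0 (xg J j)).
    { apply (limits_of_equal_sequences (fun n => psi (S n) O j * phi n O j)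
                                       (fun _ => m0 (xg J j))).
      - intro n. rewrite (proj2 (Hsys n) j Hj). field. apply Hphi0, Hj.
      - apply CV_mult; [apply HcvpsiS | apply Hcvphi]; lia.
      - apply cv_const. }
    rewrite <- Hm0. field. apply Hphih0, Hj.
Qed.

End Scheme.

Theorem proposition11
  (T sigma : R) (I J : nat) (uT m0 : R -> R) (f : R -> R -> R)
  (uTn m0n fn : R)
  (HT : 0 < T) (Hsigma : 0 < sigma) (HI : (1 <= I)%nat) (HJ : (1 <= J)%nat)
  (HuT : is_sup_norm uT uTn)
  (Hm0 : is_sup_norm m0 m0n)
  (Hm0pos : forall x, 0 <= x <= 1 -> 0 <= m0 x)
  (Hfc : continuous2_on f)
  (Hfmon : forall x z1 z2, 0 <= x <= 1 -> z1 <= z2 -> f x z2 <= f x z1)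
  (Hfn : is_sup_norm2 f fn)
  (Hfneg : forall x z, 0 <= x <= 1 -> f x z <= 0)
  (phi psi : nat -> mat)
  (Hpsi0 : forall i j, (i <= I)%nat -> (j <= J)%nat -> psi O i j = 0)
  (Hphi : forall n, phi_system T sigma I J uT f (psi n) (phi n))
  (Hpsi : forall n, psi_system T sigma I J m0 f (phi n) (psi (S n))) :
  let eps := exp (- (1 / sigma ^ 2) * (uTn + fn * T)) in
  (* (i) *)
  (forall n, in_M I J eps (phi n)) /\
  (forall n i j, (i <= I)%nat -> (j <= J)%nat -> phi (S n) i j <= phi n i j) /\
  (* (ii) *)
  (forall n, in_M I J 0 (psi n)) /\
  (forall n i j, (i <= I)%nat -> (j <= J)%nat -> psi n i j <= psi (S n) i j) /\
  (forall n i j, (i <= I)%nat -> (j <= J)%nat -> psi n i j <= m0n / eps) /\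
  (* (iii) *)
  (exists phih psih : mat,
     (forall i j, (i <= I)%nat -> (j <= J)%nat ->
        Un_cv (fun n => phi n i j) (phih i j) /\ Un_cv (fun n => psi n i j) (psih i j)) /\
     in_M I J eps phih /\ in_M I J 0 psih /\
     phi_system T sigma I J uT f psih phih /\
     psi_system T sigma I J m0 f phih psih).
Proof.
  intros eps.
  assert (Heps : 0 < eps) by apply exp_pos.
  assert (Hfn0 : 0 <= fn) by (pose proof (sup_norm2_bounds f fn Hfn 0 0 ltac:(lra)); lra).
  assert (Hphi_eps : forall n, in_M I J eps (phi n)).
  { intro n. apply (Phi_lower_bound T sigma I J uT f HT Hsigma HI HJ Hfneg uTn fn (psi n));
      [intros x Hx; apply (sup_norm_bounds uT uTn HuT x Hx)
      | intros x z Hx; apply (sup_norm2_bounds f fn Hfn x z Hx) | exact Hfn0 | apply Hphi]. }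
  assert (Hphi0_eps : forall n j, (j <= J)%nat -> eps <= phi n O j)
    by (intros n j Hj; apply Hphi_eps; lia).
  assert (Hpsi_nonneg : forall n, in_M I J 0 (psi n)).
  { intros [|n]; [intros i j Hi Hj; rewrite Hpsi0 by auto; lra|].
    apply (psi_nonneg T sigma I J m0 f HT Hsigma HI HJ Hm0pos Hfneg (phi n)); [|apply Hpsi].
    intros j Hj; pose proof (Hphi0_eps n j Hj); lra. }
  assert (Hpsi_ub : forall n i j, (i <= I)%nat -> (j <= J)%nat -> psi n i j <= m0n / eps).
  { intros [|n] i j Hi Hj.
    - rewrite Hpsi0 by auto. apply div_nonneg; [|exact Heps].
      pose proof (sup_norm_bounds m0 m0n Hm0 0 ltac:(lra)); pose proof (Hm0pos 0 ltac:(lra)); lra.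
    - apply (psi_upper_bound T sigma I J m0 f HT Hsigma HI HJ Hm0pos Hfneg m0n eps (phi n));
        auto; intros x Hx; apply (sup_norm_bounds m0 m0n Hm0 x Hx). }
  pose proof (iterates_monotone T sigma I J uT m0 f HT Hsigma HI HJ Hm0pos Hfneg Hfmon
                eps phi psi Heps Hphi_eps Hpsi_nonneg Hpsi0 Hphi Hpsi) as Hmono.
  destruct (mat_decreasing_cv I J phi eps (fun n => proj2 (Hmono n)) Hphi_eps) as [phih Hcvphi].
  destruct (mat_increasing_cv I J psi (m0n / eps) (fun n => proj1 (Hmono n)) Hpsi_ub)
    as [psih Hcvpsi].
  assert (Hphih : in_M I J eps phih) by exact (in_M_limit I J eps phi phih Hphi_eps Hcvphi).
  split; [exact Hphi_eps|]. split; [intros n; apply Hmono|].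
  split; [exact Hpsi_nonneg|]. split; [intros n; apply Hmono|]. split; [exact Hpsi_ub|].
  exists phih, psih.
  split; [intros i j Hi Hj; split; auto|]. split; [exact Hphih|].
  split; [exact (in_M_limit I J 0 psi psih Hpsi_nonneg Hcvpsi)|].
  split; [exact (phi_system_limit T sigma I J uT f HI HJ Hfc phi psi phih psih Hphi Hcvphi Hcvpsi)|].
  apply (psi_system_limit T sigma I J m0 f HI HJ Hfc phi psi phih psih Hpsi Hcvphi Hcvpsi);
    [intros n j Hj; pose proof (Hphi0_eps n j Hj) | intros j Hj; pose proof (Hphih O j ltac:(lia) Hj)];
    lra.
Qed.
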